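(* Let $R$ be a commutative ring and $M$ an $R$-module. The following are equivalent: (1) $M$ is a finitely presented $R$-module; (2) $M$ is $u$-$(R\setminus\mathfrak p)$-finitely presented for every prime ideal $\mathfrak p$ of $R$; (3) $M$ is $u$-$(R\setminus\mathfrak m)$-finitely presented for every maximal ideal $\mathfrak m$ of $R$.
   Context: For a multiplicative subset $S$ of $R$ (containing $1$, closed under products), an $R$-module $M$ is $u$-$S$-finitely presented if there are $s\in S$ and an exact sequence $0\to T_1\to F\to M\to T_2\to 0$ with $F$ finitely presented and $sT_1=sT_2=0$. *)

From HB Require Import structures.
From mathcomp Require Import all_boot all_algebra.
Set Implicit Arguments. Unset Strict Implicit. Unset Printing Implicit Defensive.
Import GRing.Theory.
Local Open Scope ring_scope.

Section Defs.
Variable R : comPzRingType.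

Definition is_ideal (I : R -> Prop) : Prop :=
  [/\ I 0, (forall x y, I x -> I y -> I (x + y)) & (forall a x, I x -> I (a * x))].

Definition prime_ideal (P : R -> Prop) : Prop :=
  [/\ is_ideal P, ~ P 1 & (forall a b, P (a * b) -> P a \/ P b)].

Definition maximal_ideal (Mx : R -> Prop) : Prop :=
  [/\ is_ideal Mx, ~ Mx 1 &
     (forall J : R -> Prop, is_ideal J -> (forall x, Mx x -> J x) ->
        (forall x, J x -> Mx x) \/ J 1)].

Definition exact_at (A B C : zmodType) (f : A -> B) (g : B -> C) : Prop :=
  forall y, g y = 0 <-> exists x, f x = y.

Definition fin_presented (M : lmodType R) : Prop :=
  exists (n m : nat) (g : {linear 'rV[R]_m -> 'rV[R]_n}) (f : {linear 'rV[R]_n -> M}),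
    exact_at g f /\ (forall y : M, exists x, f x = y).

Definition u_fin_presented (S : R -> Prop) (M : lmodType R) : Prop :=
  exists (s : R) (T1 F T2 : lmodType R)
         (i : {linear T1 -> F}) (h : {linear F -> M}) (p : {linear M -> T2}),
    S s /\ fin_presented F /\
    (forall t, i t = 0 -> t = 0) /\
    exact_at i h /\ exact_at h p /\
    (forall z : T2, exists y, p y = z) /\
    (forall t : T1, s *: t = 0) /\
    (forall t : T2, s *: t = 0).

End Defs.

(* Only (3) => (1) needs an argument.  For a submodule N of V, the t in R
   such that tN lies in a finitely generated submodule of N form an ideal, and
   an ideal contained in no maximal ideal contains 1.  A sequence
   0 -> T1 -> F -> M -> T2 -> 0 with F finitely presented, s T1 = s T2 = 0 and
   s outside m puts s into this ideal for N = M, so M is a quotient of a free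
   module R^n by some phi; lifting maps along free modules then puts s^2 into
   it for N = ker phi. *)

From HB Require Import structures.
From mathcomp Require Import all_boot all_algebra.
From mathcomp Require Import boolp classical_sets.
Set Implicit Arguments. Unset Strict Implicit. Unset Printing Implicit Defensive.
Import GRing.Theory.
Local Open Scope ring_scope.

Section Ideals.
Variable R : comPzRingType.
Local Open Scope classical_set_scope.

Lemma maximal_ideal_prime (Mx : R -> Prop) : maximal_ideal Mx -> prime_ideal Mx.
Proof.
move=> [[Mx0 MxD MxM] Mx1 Mxmax]; split=> // a b Mxab.
have [|Mxa] := EM (Mx a); [by left | right].
pose J x := exists m r, Mx m /\ x = m + r * a.
have J_ideal : is_ideal J.
  split; first by exists 0, 0; rewrite mul0r addr0.
    move=> _ _ [m1 [r1 [Mxm1 ->]]] [m2 [r2 [Mxm2 ->]]].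
    exists (m1 + m2), (r1 + r2); rewrite mulrDl addrACA.
    by split=> //; apply: MxD.
  move=> c _ [m [r [Mxm ->]]]; exists (c * m), (c * r).
  by rewrite mulrDr mulrA; split=> //; apply: MxM.
have [x Mxx|JMx|[m [r [Mxm e1]]]] := Mxmax J J_ideal.
- by exists x, 0; rewrite mul0r addr0.
- by case: Mxa; apply: JMx; exists 0, 1; rewrite add0r mul1r.
have -> : b = b * m + r * (a * b).
  by rewrite -[b in LHS]mulr1 e1 mulrDr mulrCA [b * a]mulrC.
by apply: MxD; apply: MxM.
Qed.

Lemma ideal_sub_maximal (H : R -> Prop) : is_ideal H -> ~ H 1 ->
  exists2 Mx, maximal_ideal Mx & H `<=` Mx.
Proof.
move=> [H0 HD HM] H1.
(* Working with [H `|` I] rather than [I] makes the empty chain harmless. *)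
pose P (I : set R) := is_ideal (H `|` I) /\ ~ I 1.
have [A [[A_ideal A1] Amax]] : exists A, P A /\ forall B, A `<` B -> ~ P B.
  apply: Zorn_bigcup => C CP Ctot; split; last by case=> I /CP [_ I1].
  set U := \bigcup_(X in C) X.
  have chainD I x y : C I -> (H `|` I) x -> (H `|` I) y -> (H `|` U) (x + y).
    move=> CI Ix Iy; have [[_ ID _] _] := CP I CI.
    by case: (ID x y Ix Iy) => [|?]; [left | right; exists I].
  split; first by left.
    move=> x y [Hx|[I CI Ix]] [Hy|[J CJ Jy]].
    - by left; apply: HD.
    - by apply: (chainD J) => //; [left | right].
    - by apply: (chainD I) => //; [right | left].
    - have [IJ|JI] := Ctot I J CI CJ.
      + by apply: (chainD J) => //; right => //; apply: IJ.
      + by apply: (chainD I) => //; right => //; apply: JI.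
  move=> a x [Hx|[I CI Ix]]; first by left; apply: HM.
  have [[_ _ IM] _] := CP I CI.
  by case: (IM a x (or_intror Ix)) => [|?]; [left | right; exists I].
exists (H `|` A) => //; split=> // [[//|//]|J J_ideal HAJ].
have [J1|J1] := EM (J 1); [by right | left].
apply: contrapT => JnHA; apply: (Amax J).
  by split=> [x Ax|JA]; [apply: HAJ; right | apply: JnHA => x /JA; right].
by rewrite /P setUidr => [|x Hx]; [split | apply: HAJ; left].
Qed.

Lemma ideal1_of_not_sub_maximal (H : R -> Prop) : is_ideal H ->
  (forall Mx, maximal_ideal Mx -> exists2 s, H s & ~ Mx s) -> H 1.
Proof.
move=> H_ideal Hmax; apply: contrapT => H1.
have [Mx Mx_max HMx] := ideal_sub_maximal H_ideal H1.
by have [s /HMx] := Hmax Mx Mx_max.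
Qed.

End Ideals.

Section FreeModules.
Variable R : comPzRingType.

Section LinComb.
Variables (V : lmodType R) (n : nat) (v : 'I_n -> V).

Definition lincomb (x : 'rV[R]_n) : V := \sum_j x 0 j *: v j.

Lemma lincomb_is_linear : linear lincomb.
Proof.
move=> a x y; rewrite /lincomb scaler_sumr -big_split; apply: eq_bigr => j _.
by rewrite !mxE scalerDl scalerA.
Qed.
HB.instance Definition _ :=
  GRing.isLinear.Build R 'rV[R]_n V *:%R lincomb lincomb_is_linear.

End LinComb.

Lemma linear_row_delta (V : lmodType R) n (L : {linear 'rV[R]_n -> V}) x :
  L x = \sum_j x 0 j *: L (delta_mx 0 j).
Proof.
rewrite {1}(row_sum_delta x) linear_sum.
by apply: eq_bigr => j _; rewrite linearZ_LR.
Qed.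

Lemma rV_lift (U V : lmodType R) n (pi : {linear U -> V})
    (u : {linear 'rV[R]_n -> V}) :
  (forall j, exists z, pi z = u (delta_mx 0 j)) ->
  exists a : {linear 'rV[R]_n -> U}, forall x, pi (a x) = u x.
Proof.
move=> /fin_all_exists[c cP]; exists (lincomb c) => x.
rewrite [u x]linear_row_delta linear_sum; apply: eq_bigr => j _.
by rewrite linearZ_LR cP.
Qed.

End FreeModules.

Section Conductor.
Variables (R : comPzRingType) (V : lmodType R) (N : V -> Prop).
Hypotheses (N0 : N 0) (ND : forall a b, N a -> N b -> N (a + b)).

Definition fg_conductor (t : R) : Prop :=
  exists k (g : {linear 'rV[R]_k -> V}),
    (forall x, N (g x)) /\ (forall y, N y -> exists x, g x = t *: y).

Lemma fg_conductor_ideal : is_ideal fg_conductor.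
Proof.
split.
- by exists 0, \0; split=> // y _; exists 0; rewrite scale0r.
- move=> a b [k1 [g1 [g1N g1P]]] [k2 [g2 [g2N g2P]]].
  exists (k1 + k2), ((g1 \o lsubmx) \+ (g2 \o rsubmx) : 'rV_(k1 + k2) -> V).
  split=> [x|y Ny]; first exact: ND (g1N _) (g2N _).
  have [[x1 g1x1] [x2 g2x2]] := conj (g1P y Ny) (g2P y Ny).
  by exists (row_mx x1 x2); rewrite /= row_mxKl row_mxKr g1x1 g2x2 scalerDl.
- move=> a t [k [g [gN gP]]]; exists k, g; split=> // y /gP[x gx].
  by exists (a *: x); rewrite linearZ_LR gx scalerA.
Qed.

Lemma fg_conductor1_of_maximal :
  (forall Mx, maximal_ideal Mx -> exists2 s, fg_conductor s & ~ Mx s) ->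
  fg_conductor 1.
Proof. exact: ideal1_of_not_sub_maximal fg_conductor_ideal. Qed.

End Conductor.

Section UFinPresentedLocal.
Variables (R : comPzRingType) (M F T1 T2 : lmodType R) (s : R).
Variables (i : {linear T1 -> F}) (h : {linear F -> M}) (p : {linear M -> T2}).
Hypotheses (exact_ih : exact_at i h) (exact_hp : exact_at h p).
Hypotheses (sT1 : forall t : T1, s *: t = 0) (sT2 : forall t : T2, s *: t = 0).
Variables (np mp : nat) (gF : {linear 'rV[R]_mp -> 'rV[R]_np}).
Variable fF : {linear 'rV[R]_np -> F}.
Hypotheses (exact_F : exact_at gF fF) (fF_onto : forall z, exists x, fF x = z).

Lemma scale_mem_image y : exists x, h (fF x) = s *: y.
Proof.
have /exact_hp[z hz] : p (s *: y) = 0 by rewrite linearZ_LR sT2.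
by have [x fx] := fF_onto z; exists x; rewrite fx.
Qed.

Lemma scale_ker0 z : h z = 0 -> s *: z = 0.
Proof. by move=> /exact_ih[t <-]; rewrite -linearZ_LR sT1 linear0. Qed.

Lemma fg_conductorT : fg_conductor (fun _ : M => True) s.
Proof. by exists np, (h \o fF); split=> // y _; apply: scale_mem_image. Qed.

Lemma fg_conductor_ker n (phi : {linear 'rV[R]_n -> M}) :
  (forall y, exists x, phi x = y) -> fg_conductor (fun x => phi x = 0) (s * s).
Proof.
move=> phi_onto.
have [al alP] : exists al : {linear 'rV[R]_n -> 'rV[R]_np},
    forall x, h (fF (al x)) = s *: phi x.
  apply: (rV_lift (pi := h \o fF) (u := ( *:%R s) \o phi)) => j.
  exact: scale_mem_image.
have [be beP] : exists be : {linear 'rV[R]_np -> 'rV[R]_n},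
    forall x, phi (be x) = h (fF x).
  by apply: (rV_lift (pi := phi) (u := h \o fF)) => j; apply: phi_onto.
pose D := (( *:%R s) \- (be \o al) : 'rV_n -> 'rV_n).
(* For x in ker phi, s (al x) is a relation of F, say gF z, and then
   s^2 x = D (s x) + be (gF z). *)
exists (n + mp),
  ((D \o lsubmx) \+ ((be \o gF) \o rsubmx) : 'rV_(n + mp) -> 'rV_n).
split=> [x|x phix0].
  rewrite /= linearD linearB linearZ_LR /= !beP alP.
  have -> : fF (gF (rsubmx x)) = 0 by apply/exact_F; exists (rsubmx x).
  by rewrite linear0 subrr addr0.
have /exact_F[z gz] : fF (s *: al x) = 0.
  by rewrite linearZ_LR scale_ker0 // alP phix0 scaler0.
exists (row_mx (s *: x) z); rewrite /= row_mxKl row_mxKr gz.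
by rewrite !linearZ_LR /= scalerN subrK scalerA.
Qed.

End UFinPresentedLocal.

Section LocalGlobal.
Variables (R : comPzRingType) (M : lmodType R).

Lemma u_fin_presented_fg_conductor (S : R -> Prop) :
  u_fin_presented S M ->
  exists2 s, S s & fg_conductor (fun _ : M => True) s /\
    forall n (phi : {linear 'rV[R]_n -> M}), (forall y, exists x, phi x = y) ->
      fg_conductor (fun x => phi x = 0) (s * s).
Proof.
move=> [s [T1 [F [T2 [i [h [p [Ss [[np [mp [gF [fF [exact_F fF_onto]]]]]
  [_ [exact_ih [exact_hp [_ [sT1 sT2]]]]]]]]]]]]]].
exists s => //; split; first exact: (fg_conductorT exact_hp sT2 fF_onto).
move=> n phi.
exact: (fg_conductor_ker exact_ih exact_hp sT1 sT2 exact_F fF_onto).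
Qed.

Lemma fin_presented_of_maximal_local :
  (forall Mx, maximal_ideal Mx -> u_fin_presented (fun r => ~ Mx r) M) ->
  fin_presented M.
Proof.
move=> locM.
have [n [phi [_ phi_onto]]] : fg_conductor (fun _ : M => True) 1.
  apply: fg_conductor1_of_maximal => // Mx /locM/u_fin_presented_fg_conductor.
  by case=> s Mxs [fgM _]; exists s.
have {}phi_onto y : exists x, phi x = y.
  by have [x] := phi_onto y I; rewrite scale1r; exists x.
have [k [g [gK gP]]] : fg_conductor (fun x => phi x = 0) 1.
  apply: fg_conductor1_of_maximal => [|a b phia phib|Mx Mx_max].
  - exact: linear0.
  - by rewrite linearD phia phib addr0.
  have [s Mxs [_ fgK]] := u_fin_presented_fg_conductor (locM Mx Mx_max).
  exists (s * s); first exact: fgK.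
  by have [_ _ Mx_prime] := maximal_ideal_prime Mx_max => /Mx_prime[].
exists n, k, g, phi; split=> // y; split=> [/gP[x]|[x <-]]; last exact: gK.
by rewrite scale1r; exists x.
Qed.

Lemma u_fin_presented_of_fin_presented (S : R -> Prop) :
  S 1 -> fin_presented M -> u_fin_presented S M.
Proof.
move=> S1 fpM.
exists 1, 'rV[R]_0, M, 'rV[R]_0, \0, idfun, \0.
do 2 split=> //; split=> [t _|]; first exact: thinmx0.
split=> [y|]; first by split=> /= [->|[x <-]]; [exists 0 |].
split=> [y|]; first by split=> // _; exists y.
split=> [z|]; first by exists 0; rewrite (thinmx0 z).
by split=> t; exact: thinmx0.
Qed.

End LocalGlobal.

Theorem proposition2p6 (R : comPzRingType) (M : lmodType R) :
  (fin_presented M <->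
     (forall P : R -> Prop, prime_ideal P -> u_fin_presented (fun r => ~ P r) M)) /\
  (fin_presented M <->
     (forall Mx : R -> Prop, maximal_ideal Mx -> u_fin_presented (fun r => ~ Mx r) M)).
Proof.
split; split.
- by move=> fpM P [_ P1 _]; apply: u_fin_presented_of_fin_presented.
- move=> locM; apply: fin_presented_of_maximal_local => Mx /maximal_ideal_prime.
  exact: locM.
- by move=> fpM Mx [_ Mx1 _]; apply: u_fin_presented_of_fin_presented.
- exact: fin_presented_of_maximal_local.
Qed.
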